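(* Let $N\ge1$, $\lambda_0,\dots,\lambda_N>0$ and $\gamma_0,\dots,\gamma_N\in\mathbb{C}$ distinct, and let $$p(\eta,\zeta)=\sum_{i=0}^N\lambda_i^2\prod_{\substack{j=0\\ j\neq i}}^N(\zeta-\gamma_j)(1+\eta\bar\gamma_j)$$ be the polynomial defining the spectral curve of the corresponding JNR monopole. Then the holomorphic sphere of this JNR monopole is (up to the action of $U(N+1)$) $$q(z)=\Big[\frac{\lambda_0}{z-\gamma_0}:\frac{\lambda_1}{z-\gamma_1}:\cdots:\frac{\lambda_N}{z-\gamma_N}\Big],$$ i.e. $q:\mathbb{P}^1\to\mathbb{P}^N$ is a full holomorphic map of degree $N$, and its lift $\tilde q(z)=\big(\lambda_i\prod_{j\neq i}(z-\gamma_j)\big)_{i=0}^N$ satisfies $$\langle\tilde q(-1/\bar\eta),\tilde q(\zeta)\rangle=\frac{(-1)^N}{\eta^N}\,p(\eta,\zeta).$$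
   Context: $\langle\cdot,\cdot\rangle$ is the standard Hermitian inner product on $\mathbb{C}^{N+1}$, conjugate-linear in the first factor. A holomorphic map $q:\mathbb{P}^1\to\mathbb{P}^N$ is full if its image is not contained in a proper projective subspace. For a charge $N$ hyperbolic monopole whose spectral curve is defined by a polynomial $p$ normalized so that $p(\eta,\zeta)=(-1)^N\eta^N\zeta^N\overline{p(-1/\bar\zeta,-1/\bar\eta)}$ and $p(-1/\bar\zeta,\zeta)\bar\zeta^N>0$ (the JNR polynomial above satisfies these), the holomorphic sphere (Murray–Norbury–Singer) is the degree $N$ full holomorphic map $q:\mathbb{P}^1\to\mathbb{P}^N$, unique up to the action of $U(N+1)$, admitting a polynomial lift $\tilde q$ with $\langle\tilde q(-1/\bar\eta),\tilde q(\zeta)\rangle=(-1)^N\eta^{-N}p(\eta,\zeta)$; its pullback of the Kähler form of $\mathbb{P}^N$ is the curvature of the limiting connection at infinity. *)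

From mathcomp Require Import all_boot all_algebra.
From mathcomp Require Export reals complex.
Set Implicit Arguments. Unset Strict Implicit. Unset Printing Implicit Defensive.
Import GRing.Theory Num.Theory.
Local Open Scope ring_scope.
Local Open Scope complex_scope.

Definition herm (R : realType) (n : nat) (u v : 'I_n -> R[i]) : R[i] :=
  \sum_(i < n) (u i)^* * v i.

Definition jnr_p (R : realType) (N : nat) (lam : 'I_N.+1 -> R)
    (gam : 'I_N.+1 -> R[i]) (eta zeta : R[i]) : R[i] :=
  \sum_(i < N.+1) ((lam i)%:C ^+ 2 *
     \prod_(j < N.+1 | j != i) ((zeta - gam j) * (1 + eta * (gam j)^*))).

(* Polynomial lift  q~_i(z) = lam_i prod_{j<>i} (z - gam_j)  of
   q(z) = [lam_0/(z-gam_0) : ... : lam_N/(z-gam_N)]. *)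
Definition jnr_lift (R : realType) (N : nat) (lam : 'I_N.+1 -> R)
    (gam : 'I_N.+1 -> R[i]) : 'I_N.+1 -> {poly R[i]} :=
  fun i => (lam i)%:C *: \prod_(j < N.+1 | j != i) ('X - (gam j)%:P).

Definition lift_eval (R : realType) (n : nat) (Q : 'I_n -> {poly R[i]})
    (z : R[i]) : 'I_n -> R[i] := fun i => (Q i).[z].

(* A polynomial lift Q : C -> C^(n) (components of degree <= d) defines a
   holomorphic map P^1 -> P^(n-1) of degree d when the components have no
   common zero on C and their z^d-coefficients are not all zero (so the map is
   defined at infinity, with value the vector of z^d-coefficients). *)
Definition poly_map_of_degree (R : realType) (n : nat) (Q : 'I_n -> {poly R[i]})
    (d : nat) : Prop :=
  (forall i, (size (Q i) <= d.+1)%N) /\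
  (exists i, (size (Q i) == d.+1)%N) /\
  (forall z : R[i], exists i, (Q i).[z] != 0).

(* Full: the image is not contained in a proper projective subspace, i.e. in
   no hyperplane {sum_i a_i w_i = 0} with a <> 0.  (The point at infinity is a
   limit of finite points, so it suffices to test finite points.) *)
Definition full_map (R : realType) (n : nat) (Q : 'I_n -> {poly R[i]}) : Prop :=
  forall a : 'I_n -> R[i],
    (forall z : R[i], \sum_(i < n) a i * (Q i).[z] = 0) -> forall i, a i = 0.

From mathcomp Require Import all_boot all_algebra.
From mathcomp Require Import reals complex.
From mathcomp Require Import ring.
Set Implicit Arguments.
Unset Strict Implicit.
Unset Printing Implicit Defensive.

Import GRing.Theory Num.Theory.
Local Open Scope ring_scope.
Local Open Scope complex_scope.

(* The component [q~_i] vanishes at every [gam_j] with [j <> i] but not at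
   [gam_i].  Hence the components have no common zero, and evaluating a linear
   relation [sum_i a_i q~_i = 0] at [gam_k] isolates [a_k], which gives
   fullness.  The inner product identity holds term by term, because the
   antipodal map [z |-> -1/conj z] satisfies
   [conj (-1/conj eta - g) = -(1 + eta conj g)/eta]. *)

Lemma size_prod_XsubC_neq (F : comNzRingType) (I : finType) (c : I -> F) (i : I) :
  size (\prod_(j | j != i) ('X - (c j)%:P)) = #|I|.
Proof.
rewrite -(big_enum _ _ (predC1 i) (fun j => 'X - (c j)%:P)) size_prod_XsubC.
by rewrite -cardE cardC1 prednK //; apply/card_gt0P; exists i.
Qed.

Section ProdSubNeq.
Variables (F : idomainType) (I : finType) (c : I -> F).
Hypothesis c_inj : injective c.

Lemma prod_subr_neq_eq0 (i k : I) :
  (\prod_(j | j != i) (c k - c j) == 0) = (k != i).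
Proof.
apply/prodf_eq0/idP => [[j ji] | ki]; first by rewrite subr_eq0 => /eqP /c_inj ->.
by exists k; rewrite ?subrr.
Qed.

Lemma exists_prod_subr_neq_neq0 (i0 : I) (z : F) :
  exists i, \prod_(j | j != i) (z - c j) != 0.
Proof.
case: (pickP [pred k | c k == z]) => [k /eqP <- | no_root].
  by exists k; rewrite prod_subr_neq_eq0 eqxx.
exists i0; apply/prodf_eq0 => -[j _].
by rewrite subr_eq0 eq_sym; have /= -> := no_root j.
Qed.

End ProdSubNeq.

Lemma conjC_antipodeB (C : numClosedFieldType) (eta g : C) : eta != 0 ->
  ((- (eta^*)^-1 - g)^* = - eta^-1 * (1 + eta * g^*))%R.
Proof.
move=> eta_neq0; rewrite rmorphB rmorphN fmorphV /= conjCK.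
by rewrite mulrDr mulr1 mulNr mulrA mulVf // mul1r.
Qed.

Section JNRLift.
Variables (R : realType) (N : nat) (lam : 'I_N.+1 -> R) (gam : 'I_N.+1 -> R[i]).
Hypotheses (lam_gt0 : forall i, 0 < lam i) (gam_inj : injective gam).
Local Notation q := (jnr_lift lam gam).

Lemma horner_jnr_lift i z :
  (q i).[z] = (lam i)%:C * \prod_(j | j != i) (z - gam j).
Proof.
by rewrite hornerZ horner_prod; under eq_bigr do rewrite hornerXsubC.
Qed.

Lemma lamC_neq0 i : (lam i)%:C != 0.
Proof. by apply: contraNneq (lt0r_neq0 (lam_gt0 i)) => -[->]. Qed.

Lemma size_jnr_lift i : size (q i) = N.+1.
Proof. by rewrite size_scale ?lamC_neq0 // size_prod_XsubC_neq card_ord. Qed.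

Lemma jnr_lift_of_degree : poly_map_of_degree q N.
Proof.
split; first by move=> i; rewrite size_jnr_lift.
split; first by exists ord0; rewrite size_jnr_lift.
move=> z; have [i prod_neq0] := exists_prod_subr_neq_neq0 gam_inj ord0 z.
by exists i; rewrite horner_jnr_lift mulf_neq0 ?lamC_neq0.
Qed.

Lemma jnr_lift_full : full_map q.
Proof.
move=> a rel k; have := rel (gam k).
rewrite (bigD1 k) //= big1 => [|i ik]; last first.
  apply/eqP; rewrite horner_jnr_lift !mulf_eq0.
  by rewrite prod_subr_neq_eq0 // (eq_sym k) ik !orbT.
rewrite addr0 horner_jnr_lift => /eqP; rewrite !mulf_eq0 (negbTE (lamC_neq0 k)).
by rewrite prod_subr_neq_eq0 // eqxx !orbF => /eqP.
Qed.

Lemma herm_jnr_lift eta zeta : eta != 0 ->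
  herm (lift_eval q (- (eta^*)^-1)) (lift_eval q zeta)
  = (-1) ^+ N / eta ^+ N * jnr_p lam gam eta zeta.
Proof.
move=> eta_neq0; rewrite /herm /jnr_p mulr_sumr; apply: eq_bigr => i _.
rewrite /lift_eval !horner_jnr_lift rmorphM rmorph_prod /= conj_Creal ?complex_real //.
under eq_bigr do rewrite conjC_antipodeB //.
rewrite big_split prodr_const cardC1 card_ord /= big_split /=.
by rewrite (exprNn eta^-1) exprVn; ring.
Qed.

End JNRLift.

Theorem mainTheorem5 (R : realType) (N : nat) (lam : 'I_N.+1 -> R)
    (gam : 'I_N.+1 -> R[i]) :
  (1 <= N)%N ->
  (forall i, 0 < lam i) ->
  injective gam ->
  [/\ poly_map_of_degree (jnr_lift lam gam) N,
      full_map (jnr_lift lam gam) &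
      forall eta zeta : R[i], eta != 0 ->
        herm (lift_eval (jnr_lift lam gam) (- (eta^*)^-1))
             (lift_eval (jnr_lift lam gam) zeta)
        = (-1) ^+ N / eta ^+ N * jnr_p lam gam eta zeta].
Proof.
move=> _ lam_gt0 gam_inj; split.
- exact: jnr_lift_of_degree.
- exact: jnr_lift_full.
- exact: herm_jnr_lift.
Qed.
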